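(* Let $H\in\mathbb{R}^{n\times d}$ have rank $h$, $\Sigma\in\mathbb{R}^{n\times n}$ symmetric positive definite, $y\in\mathbb{R}^n$, $J\ge2$, and let $\Gamma_i$ be the empirical covariances of deterministic EKI iterates $$v_{i+1}^{(j)}=v_i^{(j)}+\Gamma_iH^\top(H\Gamma_iH^\top+\Sigma)^{-1}(y-Hv_i^{(j)}).$$ Consider the generalized eigenvalue problem $H\Gamma_iH^\top w=\delta\,\Sigma w$, whose eigenvectors do not depend on $i$ and whose eigenvalue along an eigenvector evolves as $\delta_{\ell,i}$. Then an eigenvalue that is zero at $i=0$ is zero for all $i\ge1$, and an eigenvalue that is positive at $i=0$ is positive for all $i\ge1$. Let $r$ be the number of positive eigenvalues. There is a $\Sigma$-orthogonal basis $\{w_1,\dots,w_n\}$ of $\mathbb{R}^n$ consisting of eigenvectors of this problem such that: (1) $w_1,\dots,w_r\in\mathsf{Ran}(\Sigma^{-1}H)$ have positive eigenvalues $\delta_{1,i},\dots,\delta_{r,i}$, labeled so that $\delta_{1,1}\ge\delta_{2,1}\ge\dots\ge\delta_{r,1}>0$, and this ordering is preserved for all $i\ge1$; (2) if $r<h$, $w_{r+1},\dots,w_h\in\mathsf{Ran}(\Sigma^{-1}H)$ have eigenvalue zero; (3) if $h<n$, $w_{h+1},\dots,w_n\in\mathsf{Ker}(H^\top)$ have eigenvalue zero. Moreover $\mathsf{span}(w_1,\dots,w_h)=\mathsf{Ran}(\Sigma^{-1}H)$ and $\mathsf{span}(w_{h+1},\dots,w_n)=\mathsf{Ker}(H^\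top)$.
   Context: Empirical covariance $\Gamma_i=\frac1{J-1}\sum_j(v_i^{(j)}-\bar v_i)(v_i^{(j)}-\bar v_i)^\top$, $\bar v_i=\frac1J\sum_jv_i^{(j)}$. $\Sigma$-orthogonal means $w_k^\top\Sigma w_l=0$ for $k\ne l$. *)

From HB Require Import structures.
From mathcomp Require Import all_boot all_order all_algebra.
From mathcomp Require Import reals.
Set Implicit Arguments. Unset Strict Implicit. Unset Printing Implicit Defensive.
Import Order.TTheory GRing.Theory Num.Theory.
Local Open Scope ring_scope.

Section EKI.
Variable R : realType.

Definition spd (n : nat) (S : 'M[R]_n) : Prop :=
  S^T = S /\ forall x : 'cV[R]_n, x != 0 -> 0 < (x^T *m S *m x) 0 0.

Definition ens_mean (J d : nat) (v : 'I_J -> 'cV[R]_d) : 'cV[R]_d :=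
  (J%:R)^-1 *: \sum_(j < J) v j.

Definition ens_cov (J d : nat) (v : 'I_J -> 'cV[R]_d) : 'M[R]_d :=
  ((J.-1)%:R)^-1 *: \sum_(j < J) ((v j - ens_mean v) *m (v j - ens_mean v)^T).

Definition eki_step (n d J : nat) (H : 'M[R]_(n, d)) (S : 'M[R]_n) (y : 'cV[R]_n)
  (v : 'I_J -> 'cV[R]_d) : 'I_J -> 'cV[R]_d :=
  fun j => v j + ens_cov v *m H^T *m invmx (H *m ens_cov v *m H^T + S)
                   *m (y - H *m v j).

Definition eki_iter (n d J : nat) (H : 'M[R]_(n, d)) (S : 'M[R]_n) (y : 'cV[R]_n)
  (v0 : 'I_J -> 'cV[R]_d) (i : nat) : 'I_J -> 'cV[R]_d :=
  iter i (eki_step H S y) v0.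

Definition eki_Gamma (n d J : nat) (H : 'M[R]_(n, d)) (S : 'M[R]_n) (y : 'cV[R]_n)
  (v0 : 'I_J -> 'cV[R]_d) (i : nat) : 'M[R]_d :=
  ens_cov (eki_iter H S y v0 i).

End EKI.

From HB Require Import structures.
From mathcomp Require Import all_boot all_order all_algebra.
From mathcomp Require Import reals complex spectral.
From mathcomp Require Import zify ring lra.
Import Order.TTheory GRing.Theory Num.Theory.
Local Open Scope ring_scope.
Set Implicit Arguments. Unset Strict Implicit. Unset Printing Implicit Defensive.

(* With A := H Gamma H^T and C := A + Sigma, the Kalman-gain identity
   H (1 - K H) = Sigma C^-1 H turns one EKI step into
   A |-> Sigma C^-1 A C^-1 Sigma.  Hence a generalized eigenvector w of the
   pencil (A_0, Sigma) stays one for all i, its eigenvalue evolving by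
   delta |-> delta / (1 + delta)^2; this map fixes 0, preserves positivity
   and is increasing on [0, 1], which contains its range, so the order of
   the eigenvalues at i = 1 persists.
   The Sigma-orthogonal eigenbasis is assembled from bases of the two
   subspaces Ran(Sigma^-1 H) and Ker(H^T): they are Sigma-orthogonal to each
   other and invariant under A_0 Sigma^-1.  In such an invariant subspace a
   real generalized eigenvector exists (a complex eigenvalue is the ratio of
   two real Hermitian forms, the second one positive), and its
   Sigma-orthogonal complement in the subspace is again invariant. *)

Lemma trmx11 (T : Type) (a : 'M[T]_1) : a^T = a.
Proof. by apply/matrixP => i j; rewrite !mxE !ord1. Qed.

Lemma mxrank_cap_kermx (F : fieldType) m n (U : 'M[F]_(m, n)) (c : 'cV_n) :
  (\rank U <= (\rank (U :&: kermx c)%MS).+1)%N.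
Proof.
have := mxrank_sum_cap U (kermx c); rewrite mxrank_ker.
have := rank_leq_col (U + kermx c)%MS; have := rank_leq_col c; lia.
Qed.

Lemma eqmx_of_mxrank_adds (F : fieldType) n p1 p2 m1 m2 (V1 : 'M[F]_(p1, n))
    (V2 : 'M[F]_(p2, n)) (U1 : 'M[F]_(m1, n)) (U2 : 'M[F]_(m2, n)) :
  (V1 <= U1)%MS -> (V2 <= U2)%MS -> (\rank U1 + \rank U2 <= \rank (V1 + V2))%N ->
  (V1 == U1)%MS /\ (V2 == U2)%MS.
Proof.
move=> VU1 VU2 rU; have := (mxrank_adds_leqif V1 V2).1.
have := mxrankS VU1; have := mxrankS VU2 => r2 r1 r12.
by rewrite -(mxrank_leqif_eq VU1).2 -(mxrank_leqif_eq VU2).2; split; apply/eqP; lia.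
Qed.

Lemma ord_sort_nonincr disp (T : orderType disp) h (g : 'I_h -> T) :
  exists s : 'I_h -> 'I_h,
    injective s /\ forall i j : 'I_h, (i <= j)%N -> (g (s j) <= g (s i))%O.
Proof.
pose geT a b := (g b <= g a)%O.
set e := sort geT (enum 'I_h).
have se : size e = h by rewrite size_sort size_enum_ord.
have ue : uniq e by rewrite sort_uniq enum_uniq.
have so : sorted geT e by apply: sort_sorted => a b; rewrite /geT le_total.
exists (fun i => nth i e i); split=> i j; rewrite (set_nth_default i j) ?se //.
  by move/eqP; rewrite nth_uniq ?se // => /eqP/val_inj.
move=> ij; apply: (sorted_leq_nth _ _ _ so); rewrite ?inE ?se //.
- by move=> x y z; rewrite /geT => h1 h2; apply: le_trans h1.
- by move=> x; rewrite /geT.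
Qed.

Lemma ltn_card_downclosed n (P : pred 'I_n) :
  (forall l1 l2 : 'I_n, (l1 <= l2)%N -> P l2 -> P l1) ->
  forall l : 'I_n, P l = (l < #|P|)%N.
Proof.
move=> down l; apply/idP/idP => [Pl|].
  have le : (l.+1 <= n)%N := ltn_ord l.
  have := subset_leq_card (_ : [set widen_ord le x | x : 'I_l.+1] \subset P).
  rewrite card_imset ?card_ord; last by move=> x y /(congr1 val) /= /val_inj.
  apply; apply/subsetP => _ /imsetP [x _ ->]; apply: down Pl.
  by rewrite /= -ltnS ltn_ord.
apply: contraLR => nPl; rewrite -leqNgt.
have le : (l <= n)%N := ltnW (ltn_ord l).
have sub : P \subset [set widen_ord le x | x in [set: 'I_l]].
  apply/subsetP => k Pk.
  have kl : (k < l)%N by rewrite ltnNge; apply: contra nPl => lk; exact: down lk Pk.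
  by apply/imsetP; exists (Ordinal kl) => //; apply: val_inj.
apply: leq_trans (subset_leq_card sub) _.
by apply: leq_trans (leq_imset_card _ _) _; rewrite cardsT card_ord.
Qed.

Section Forms.
Variable R : realType.

Lemma trmx_sym_form n m (S : 'M[R]_n) (x z : 'M[R]_(m, n)) :
  S^T = S -> (x *m S *m z^T)^T = z *m S *m x^T.
Proof. by move=> sS; rewrite !trmx_mul trmxK sS mulmxA. Qed.

Definition psd n (A : 'M[R]_n) := forall x : 'rV_n, 0 <= (x *m A *m x^T) 0 0.

Lemma psd_mulmx_tr n d (H : 'M[R]_(n, d)) (G : 'M[R]_d) : psd G -> psd (H *m G *m H^T).
Proof.
move=> pG x; have -> : x *m (H *m G *m H^T) *m x^T = x *m H *m G *m (x *m H)^T.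
  by rewrite trmx_mul !mulmxA.
exact: pG.
Qed.

Variables (n : nat) (S : 'M[R]_n).
Hypothesis sS : spd S.

Lemma spd_sym : S^T = S. Proof. by case: sS. Qed.

Lemma spd_row_gt0 (v : 'rV_n) : v != 0 -> 0 < (v *m S *m v^T) 0 0.
Proof.
move=> vn0; have := sS.2 v^T; rewrite trmxK; apply.
by apply: contra vn0 => /eqP/(congr1 trmx); rewrite trmxK linear0 => ->.
Qed.

Lemma spd_row_eq0 (v : 'rV_n) : (v *m S *m v^T) 0 0 = 0 -> v = 0.
Proof.
by move=> v0; apply/eqP; apply: contraT => /spd_row_gt0; rewrite v0 ltxx.
Qed.

Lemma spd_psd : psd S.
Proof.
by move=> v; have [->|/spd_row_gt0/ltW //] := eqVneq v 0; rewrite !mul0mx mxE.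
Qed.

Lemma psd_add_spd_unitmx (A : 'M[R]_n) : psd A -> (A + S) \in unitmx.
Proof.
move=> pA; rewrite -row_free_unit -kermx_eq0; apply/eqP/row_matrixP => i.
rewrite row0; apply: spd_row_eq0; apply/eqP; rewrite eq_le spd_psd andbT.
have /sub_kermxP := row_sub i (kermx (A + S)); rewrite mulmxDr => /eqP.
rewrite addr_eq0 => /eqP AS; have := pA (row i (kermx (A + S))).
by rewrite AS mulNmx mxE oppr_ge0.
Qed.

Lemma spd_unitmx : S \in unitmx.
Proof.
have := @psd_add_spd_unitmx 0; rewrite add0r; apply=> v.
by rewrite mulmx0 mul0mx mxE.
Qed.

Lemma spd_compress m (B : 'M[R]_(m, n)) : row_free B -> spd (B *m S *m B^T).
Proof.
move=> fB; split; first by rewrite trmx_sym_form // spd_sym.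
move=> v vn0; have := @spd_row_gt0 (v^T *m B).
rewrite trmx_mul trmxK !mulmxA; apply; rewrite mulmx_free_eq0 //.
by apply: contra vn0 => /eqP/(congr1 trmx); rewrite trmxK linear0 => ->.
Qed.

Lemma sorth_row_free m (w : 'I_m -> 'rV_n) :
  (forall l, w l != 0) -> (forall l l', l != l' -> w l *m S *m (w l')^T = 0) ->
  row_free (\matrix_(l < m) w l).
Proof.
move=> wn0 ow; rewrite -kermx_eq0; apply/eqP/row_matrixP => i; rewrite row0.
have /sub_kermxP := row_sub i (kermx (\matrix_(l < m) w l)).
move: (row i _) => c cW; apply/rowP => l.
have : (c *m (\matrix_(l < m) w l) *m S *m (w l)^T) 0 0 = 0.
  by rewrite cW !mul0mx mxE.
rewrite (mulmx_sum_row c) !mulmx_suml summxE (bigD1 l) //= big1 ?addr0.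
  rewrite rowK -!scalemxAl mxE => /eqP; rewrite mulf_eq0.
  case/orP=> [/eqP ->|]; first by rewrite mxE.
  by move/eqP/spd_row_eq0/eqP; rewrite (negbTE (wn0 l)).
by move=> k kl; rewrite rowK -!scalemxAl ow // scaler0 mxE.
Qed.

Lemma gen_eigenvalue_ge0 (M : 'M[R]_n) (x : 'rV_n) (d : R) :
  psd M -> x != 0 -> x *m M = d *: (x *m S) -> 0 <= d.
Proof.
move=> pM xn0 hx; have := pM x; rewrite hx -scalemxAl mxE.
by rewrite pmulr_lge0 // spd_row_gt0.
Qed.

Lemma sorth_range_kermx d (H : 'M[R]_(n, d)) (x z : 'rV_n) :
  (x <= (invmx S *m H)^T)%MS -> z *m H = 0 -> x *m S *m z^T = 0.
Proof.
move=> /submxP [e ->] zH.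
rewrite trmx_mul trmx_inv spd_sym -!mulmxA mulKmx ?spd_unitmx //.
by rewrite -trmx_mul zH trmx0 !mulmx0.
Qed.

End Forms.

Section Pencil.
Variable R : realType.
Local Notation toC := (real_complex R).

Lemma herm_form_rect k (P : 'M[R]_k) (x y : 'rV[R]_k) : P^T = P ->
  let u := map_mx toC x + 'i%C *: map_mx toC y in
  u *m map_mx toC P *m (map_mx conjc u)^T
  = map_mx toC (x *m P *m x^T + y *m P *m y^T).
Proof.
move=> sP u.
have -> : map_mx conjc u = map_mx toC x - 'i%C *: map_mx toC y.
  by apply/matrixP => a b; rewrite !mxE; simpc.
rewrite linearB /= linearZ /= !mulmxDl !mulmxDr !mulmxN.
rewrite -!scalemxAl -!scalemxAr ?scalerA.
have := congr1 (map_mx toC) (trmx_sym_form x y sP).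
rewrite trmx11 !map_mxM -!map_trmx => ->.
have -> : 'i%C * 'i%C = -1 :> R[i] by rewrite -expr2 sqr_i.
rewrite map_mxD !map_mxM -!map_trmx scaleN1r opprK.
by rewrite addrA subrK.
Qed.

Lemma gen_eigenvalue_real k (M S : 'M[R]_k) (u : 'rV[R[i]]_k) (l : R[i]) :
  M^T = M -> spd S -> u != 0 ->
  u *m map_mx toC M = l *: (u *m map_mx toC S) -> exists t, l = toC t.
Proof.
move=> sM sS un0 hu.
set x := map_mx (@complex.Re R) u; set y := map_mx (@complex.Im R) u.
have uE : u = map_mx toC x + 'i%C *: map_mx toC y.
  by apply/matrixP => a b; rewrite !mxE [LHS]complexE.
have := congr1 (fun A => A *m (map_mx conjc u)^T) hu.
rewrite /= -scalemxAl uE (herm_form_rect _ _ sM) (herm_form_rect _ _ (spd_sym sS)).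
set a := x *m M *m x^T + _; set b := x *m S *m x^T + _.
move/matrixP/(_ 0 0) => h.
have hab : toC (a 0 0) = l * toC (b 0 0) by move: h; rewrite !mxE.
have b_gt0 : 0 < b 0 0.
  have : (x != 0) || (y != 0).
    apply: contraT; rewrite negb_or !negbK => /andP[/eqP x0 /eqP y0].
    by move: un0; rewrite uE x0 y0 !map_mx0 scaler0 addr0 eqxx.
  rewrite /b mxE => /orP [nz|nz].
    by apply: ltr_wpDr; [apply: spd_psd | apply: spd_row_gt0].
  by apply: ltr_wpDl; [apply: spd_psd | apply: spd_row_gt0].
have bn0 : toC (b 0 0) != 0 by rewrite -(rmorph0 toC) (inj_eq (@complexI R)) gt_eqF.
by exists (a 0 0 / b 0 0); rewrite fmorph_div; exact: (canRL (mulfK bn0) (esym hab)).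
Qed.

Lemma gen_eigenvector_exists k (M S : 'M[R]_k) : (0 < k)%N -> M^T = M -> spd S ->
  exists (d : R) (c : 'rV_k), c != 0 /\ c *m M = d *: (c *m S).
Proof.
move=> k0 sM sS; have Su := spd_unitmx sS; set N := invmx S *m M.
have [l /eigenvalueP [z hz zn0]] := eigenvalue_closed (map_mx toC N) k0.
have SCu : map_mx toC S \in unitmx by rewrite map_unitmx.
set u := z *m invmx (map_mx toC S).
have zE : z = u *m map_mx toC S by rewrite mulmxKV.
have un0 : u != 0 by apply: contra zn0 => /eqP u0; rewrite zE u0 mul0mx.
have [t lE] : exists t, l = toC t.
  apply: gen_eigenvalue_real sM sS un0 _.
  by rewrite -zE -hz /N map_mxM map_invmx mulmxA.
have : eigenvalue (map_mx toC N) (toC t) by apply/eigenvalueP; exists z; rewrite -?lE.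
rewrite eigenvalue_root_char -map_char_poly fmorph_root -eigenvalue_root_char.
case/eigenvalueP => c hc cn0; exists t, (c *m invmx S); split.
  by apply: contra cn0 => /eqP c0; rewrite -(mulmxKV Su c) c0 mul0mx.
by rewrite mulmxKV // -mulmxA -/N hc.
Qed.

Variables (n : nat) (M S : 'M[R]_n).
Hypotheses (sM : M^T = M) (sS : spd S).

(* Compress the pencil to U along a basis B of U: an eigenvector c of the
   compressed pencil lifts to c B, because the defect c B M S^-1 - d c B lies
   in U and is S-orthogonal to U. *)
Lemma stable_gen_eigenvector m (U : 'M[R]_(m, n)) :
  (0 < \rank U)%N -> stablemx U (M *m invmx S) ->
  exists (d : R) (x : 'rV_n), [/\ x != 0, (x <= U)%MS & x *m M = d *: (x *m S)].
Proof.
move=> rU stU; have Su := spd_unitmx sS; set B := row_base U.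
have fB : row_free B := row_base_free U.
have [d [c [cn0 hc]]] : exists d (c : 'rV_(\rank U)),
    c != 0 /\ c *m (B *m M *m B^T) = d *: (c *m (B *m S *m B^T)).
  by apply: gen_eigenvector_exists rU (trmx_sym_form _ _ sM) (spd_compress sS fB).
exists d, (c *m B); split; first by rewrite mulmx_free_eq0.
  by rewrite -(eq_row_base U) submxMl.
set z := c *m B *m M *m invmx S - d *: (c *m B).
have zU : (z <= U)%MS.
  apply: addmx_sub; last by rewrite -scaleNr scalemx_sub // -(eq_row_base U) submxMl.
  rewrite -mulmxA; apply: submx_trans stU.
  by rewrite submxMr // -(eq_row_base U) submxMl.
have zSB : z *m S *m B^T = 0.
  rewrite mulmxBl mulmxKV // -scalemxAl mulmxBl -scalemxAl.
  have compressE (T : 'M[R]_n) : c *m B *m T *m B^T = c *m (B *m T *m B^T).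
    by rewrite !mulmxA.
  by rewrite !compressE hc subrr.
suff /eqP : z = 0.
  by rewrite subr_eq0 => /eqP/(congr1 (mulmx^~ S)); rewrite mulmxKV // -scalemxAl.
have [e zE] : exists e, z = e *m B by apply/submxP; rewrite eq_row_base.
apply: (spd_row_eq0 sS).
by rewrite {2}zE trmx_mul !mulmxA zSB mul0mx mxE.
Qed.

Lemma stable_cap_sorth m (U : 'M[R]_(m, n)) (x : 'rV_n) (d : R) :
  stablemx U (M *m invmx S) -> x *m M = d *: (x *m S) ->
  stablemx (U :&: kermx (S *m x^T))%MS (M *m invmx S).
Proof.
move=> stU hx; have Su := spd_unitmx sS.
rewrite sub_capmx; apply/andP; split.
  by apply: submx_trans stU; rewrite submxMr // capmxSl.
apply/sub_kermxP; rewrite -!mulmxA mulKmx //.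
have -> : M *m x^T = d *: (S *m x^T).
  by rewrite -sM -trmx_mul hx linearZ /= trmx_mul (spd_sym sS).
by rewrite -scalemxAr (sub_kermxP (capmxSr _ _)) scaler0.
Qed.

Lemma sorth_gen_eigenvectors k m (U : 'M[R]_(m, n)) :
  (k <= \rank U)%N -> stablemx U (M *m invmx S) ->
  exists (w : 'I_k -> 'rV_n) (D : 'I_k -> R), [/\
    (forall l, w l != 0), (forall l, (w l <= U)%MS),
    (forall l, w l *m M = D l *: (w l *m S)) &
    (forall l l', l != l' -> w l *m S *m (w l')^T = 0)].
Proof.
elim: k m U => [|k IH] m U kU stU.
  by exists (fun _ => 0), (fun _ => 0); split; case.
have [d [x [xn0 xU hx]]] := stable_gen_eigenvector (leq_ltn_trans (leq0n k) kU) stU.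
set U' := (U :&: kermx (S *m x^T))%MS.
have kU' : (k <= \rank U')%N.
  by rewrite -ltnS; apply: leq_trans kU (mxrank_cap_kermx _ _).
have [w [D [wn0 wU hw ow]]] := IH _ U' kU' (stable_cap_sorth stU hx).
have wx l : w l *m S *m x^T = 0.
  by rewrite -mulmxA; apply/sub_kermxP; apply: submx_trans (wU l) (capmxSr _ _).
exists (fun l => if unlift ord0 l is Some j then w j else x).
exists (fun l => if unlift ord0 l is Some j then D j else d).
split=> [l|l|l|l l'].
- by case: unliftP.
- by case: unliftP => [j _|_ //]; apply: submx_trans (wU j) (capmxSl _ _).
- by case: unliftP.
case: unliftP => [j ->|->]; case: unliftP => [j' ->|->] // ne.
- by apply: ow; apply: contra ne => /eqP ->.
- by rewrite -[LHS]trmx11 (trmx_sym_form _ _ (spd_sym sS)) wx.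
Qed.
End Pencil.

Section Adapted.
Variables (R : realType) (h k d : nat).
Variables (H : 'M[R]_(h + k, d)) (G : 'M[R]_d) (S : 'M[R]_(h + k)).
Hypotheses (rH : \rank H = h) (sG : G^T = G) (pG : psd G) (sS : spd S).
Let M := H *m G *m H^T.

Lemma mxrank_range : \rank (invmx S *m H)^T = h.
Proof.
by rewrite trmx_mul mxrankMfree ?mxrank_tr // row_free_unit unitmx_tr unitmx_inv spd_unitmx.
Qed.

Lemma range_stable : stablemx (invmx S *m H)^T (M *m invmx S).
Proof.
rewrite trmx_mul trmx_inv (spd_sym sS) /M !mulmxA.
by rewrite -[_ *m H^T *m invmx S]mulmxA submxMl.
Qed.

Lemma kermx_stable : stablemx (kermx H) (M *m invmx S).
Proof. by rewrite /M !mulmxA mulmx_ker !mul0mx sub0mx. Qed.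

Lemma adapted_gen_eigenbasis (g : R -> R) :
  exists (w : 'I_(h + k) -> 'rV_(h + k)) (D : 'I_(h + k) -> R), [/\
    (forall l, w l != 0),
    (forall l l', l != l' -> w l *m S *m (w l')^T = 0),
    (forall l, w l *m M = D l *: (w l *m S)) &
    (forall l, 0 <= D l)] /\ [/\
    (forall l : 'I_(h + k), (l < h)%N -> (w l <= (invmx S *m H)^T)%MS),
    (forall l : 'I_(h + k), (h <= l)%N -> w l *m H = 0 /\ D l = 0) &
    (forall l1 l2 : 'I_(h + k), (l1 <= l2)%N -> (l2 < h)%N -> g (D l2) <= g (D l1))].
Proof.
have sM : M^T = M by rewrite trmx_sym_form.
have pM : psd M := psd_mulmx_tr H pG.
have rU2 : \rank (kermx H) = k by rewrite mxrank_ker rH addKn.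
have [w1 [D1 [w1n0 w1U hw1 ow1]]] :=
  sorth_gen_eigenvectors sM sS (eq_leq (esym mxrank_range)) range_stable.
have [w2 [D2 [w2n0 w2U _ ow2]]] :=
  sorth_gen_eigenvectors sM sS (eq_leq (esym rU2)) kermx_stable.
have w2H b : w2 b *m H = 0 by apply/sub_kermxP.
have [s [s_inj s_sorted]] := ord_sort_nonincr (fun a => g (D1 a)).
exists (fun l => match split l with inl a => w1 (s a) | inr b => w2 b end).
exists (fun l => match split l with inl a => D1 (s a) | inr _ => 0 end).
split; [split=> [l|l l'|l|l] | split=> [l|l|l1 l2]].
- by case: splitP.
- case: splitP => [a la|b lb]; case: splitP => [a' la'|b' lb'] ne.
  + apply: ow1; apply: contra ne => /eqP /s_inj aa'.
    by apply/eqP/val_inj; rewrite /= la la' aa'.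
  + by rewrite (sorth_range_kermx sS (w1U _) (w2H _)).
  + rewrite -[LHS]trmx11 (trmx_sym_form _ _ (spd_sym sS)).
    by rewrite (sorth_range_kermx sS (w1U _) (w2H _)).
  + apply: ow2; apply: contra ne => /eqP bb'.
    by apply/eqP/val_inj; rewrite /= lb lb' bb'.
- case: splitP => [a _|b _] //.
  by rewrite /M !mulmxA w2H !mul0mx scale0r.
- case: splitP => [a _|//].
  exact (gen_eigenvalue_ge0 sS pM (w1n0 _) (hw1 _)).
- by case: splitP => [a _ _|//]; exact: w1U.
- case: splitP => [a ->|b _ _]; last by split; [exact: w2H|].
  by rewrite leqNgt ltn_ord.
- case: splitP => [a1 -> | b1 ->]; case: splitP => [a2 -> | b2 ->] //.
  + by move=> a12 _; apply: s_sorted.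
  + by move/(leq_trans (leq_addr _ _)); rewrite leqNgt ltn_ord.
Qed.

Lemma adapted_basis_spans (w : 'I_(h + k) -> 'rV_(h + k)) :
  row_free (\matrix_l w l) ->
  (forall l : 'I_(h + k), (l < h)%N -> (w l <= (invmx S *m H)^T)%MS) ->
  (forall l : 'I_(h + k), (h <= l)%N -> w l *m H = 0) ->
  (\sum_(l < h + k | (l < h)%N) <<w l>> == (invmx S *m H)^T)%MS /\
  (\sum_(l < h + k | (h <= l)%N) <<w l>> == kermx H)%MS.
Proof.
move=> w_free wU wH; apply: eqmx_of_mxrank_adds.
- by apply/sumsmx_subP => l /wU; rewrite genmxE.
- by apply/sumsmx_subP => l /wH wlH; rewrite genmxE; apply/sub_kermxP.
rewrite mxrank_range mxrank_ker rH addKn.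
apply: (@leq_trans (\rank (\matrix_l w l))); first by rewrite (eqP w_free).
apply/mxrankS/row_subP => l; rewrite rowK; case: (ltnP l h) => lh;
  [apply: submx_trans (addsmxSl _ _) | apply: submx_trans (addsmxSr _ _)];
  by apply: (sumsmx_sup l); rewrite // genmxE.
Qed.
End Adapted.

Definition shrink {R : realType} (x : R) := x / (1 + x) ^+ 2.

Section Shrink.
Variable R : realType.
Implicit Types a b x : R.

Lemma shrink0 : shrink (0 : R) = 0. Proof. by rewrite /shrink mul0r. Qed.

Lemma shrink_ge0 x : 0 <= x -> 0 <= shrink x.
Proof. by move=> x0; rewrite divr_ge0 // exprn_ge0 // addr_ge0. Qed.

Lemma shrink_gt0 x : 0 < x -> 0 < shrink x.
Proof. by move=> x0; rewrite divr_gt0 // exprn_gt0 //; lra. Qed.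

Lemma shrink_le1 x : 0 <= x -> shrink x <= 1.
Proof.
move=> x0; have h : 0 < (1 + x) ^+ 2 by rewrite exprn_gt0 //; lra.
rewrite ler_pdivrMr // mul1r; nra.
Qed.

Lemma shrink_le a b : 0 <= a -> a <= b -> b <= 1 -> shrink a <= shrink b.
Proof.
move=> a0 ab b1.
have ha : 0 < (1 + a) ^+ 2 by rewrite exprn_gt0 //; lra.
have hb : 0 < (1 + b) ^+ 2 by rewrite exprn_gt0 //; lra.
rewrite /shrink ler_pdivrMr // mulrAC ler_pdivlMr //.
have h1 : a * b <= 1 by nra.
have h2 : 0 <= (b - a) * (1 - a * b) by apply: mulr_ge0; lra.
rewrite !expr2; nra.
Qed.

Lemma iter_shrink0 i : iter i shrink (0 : R) = 0.
Proof. by elim: i => //= i ->; rewrite shrink0. Qed.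

Lemma iter_shrink_ge0 i x : 0 <= x -> 0 <= iter i shrink x.
Proof. by move=> x0; elim: i => //= i; apply: shrink_ge0. Qed.

Lemma iter_shrink_gt0 i x : 0 < x -> 0 < iter i shrink x.
Proof. by move=> x0; elim: i => //= i; apply: shrink_gt0. Qed.

Lemma iter_shrink_le i a b : 0 <= a -> a <= b -> b <= 1 ->
  iter i shrink a <= iter i shrink b.
Proof.
elim: i a b => // i IH a b a0 ab b1; rewrite !iterSr; apply: IH.
- exact: shrink_ge0.
- exact: shrink_le.
- by apply: shrink_le1; apply: le_trans ab.
Qed.

(* [shrink] is increasing only on [0, 1], which contains its range: an order
   of the values after one step persists, the order before it need not. *)
Lemma iter_shrink_le_succ i a b : 0 <= a -> 0 <= b -> shrink a <= shrink b ->
  iter i.+1 shrink a <= iter i.+1 shrink b.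
Proof.
move=> a0 b0 ab; rewrite !iterSr; apply: iter_shrink_le => //.
- exact: shrink_ge0.
- exact: shrink_le1.
Qed.

Lemma iter_shrink_spectrum n h (D : 'I_n -> R) :
  (forall l, 0 <= D l) -> (forall l : 'I_n, (h <= l)%N -> D l = 0) ->
  (forall l1 l2 : 'I_n, (l1 <= l2)%N -> (l2 < h)%N -> shrink (D l2) <= shrink (D l1)) ->
  let r := #|[pred l | 0 < D l]| in
  [/\ (r <= h)%N,
    (forall l : 'I_n, (l < r)%N -> forall i, 0 < iter i shrink (D l)),
    (forall l : 'I_n, (r <= l)%N -> forall i, iter i shrink (D l) = 0) &
    (forall i (l1 l2 : 'I_n), (1 <= i)%N -> (l1 <= l2)%N -> (l2 < r)%N ->
      iter i shrink (D l2) <= iter i shrink (D l1))].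
Proof.
move=> D0 Dh Dsorted r.
have lt_h l : 0 < D l -> (l < h)%N.
  by rewrite ltnNge; apply: contraTN => /Dh ->; rewrite ltxx.
have Dpos : forall l, (0 < D l) = (l < r)%N.
  apply: ltn_card_downclosed => l1 l2 l12 D2; have l2h := lt_h _ D2.
  rewrite lt_def D0 andbT; apply: contraTneq (Dsorted _ _ l12 l2h) => ->.
  by rewrite shrink0 -ltNge shrink_gt0.
split=> [|l lr i|l rl i|[//|i] l1 l2 _ l12 l2r].
- rewrite leqNgt; apply/negP => hr.
  have hn : (h < n)%N.
    by apply: leq_trans hr (leq_trans (max_card _) (eq_leq (card_ord n))).
  by have := Dpos (Ordinal hn); rewrite hr Dh ?ltxx.
- by apply: iter_shrink_gt0; rewrite Dpos.
- have : ~~ (0 < D l) by rewrite Dpos -leqNgt.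
  by rewrite lt_def D0 andbT negbK => /eqP ->; exact: iter_shrink0.
- apply: iter_shrink_le_succ => //; apply: Dsorted l12 _.
  by apply: lt_h; rewrite Dpos.
Qed.
End Shrink.

Section Ensemble.
Variables (R : realType) (J d : nat).
Implicit Types v w : 'I_J -> 'cV[R]_d.

Lemma ens_cov_sym v : (ens_cov v)^T = ens_cov v.
Proof.
rewrite /ens_cov linearZ /= linear_sum /=; congr (_ *: _).
by apply: eq_bigr => j _; rewrite trmx_mul trmxK.
Qed.

Lemma ens_cov_psd v : psd (ens_cov v).
Proof.
move=> x; rewrite /ens_cov -scalemxAr -scalemxAl mxE mulr_ge0 ?invr_ge0 ?ler0n //.
rewrite mulmx_sumr mulmx_suml summxE sumr_ge0 // => j _.
rewrite !mulmxA -[_ *m _ *m x^T]mulmxA -trmx_mul.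
by move: (x *m _) => t; rewrite mxE big_ord1 mxE -expr2 sqr_ge0.
Qed.

Variables (P : 'M[R]_d) (b : 'cV[R]_d).
Hypothesis J_gt0 : (0 < J)%N.

Lemma ens_mean_affine v w : (forall j, w j = P *m v j + b) ->
  ens_mean w = P *m ens_mean v + b.
Proof.
move=> wE; rewrite /ens_mean (eq_bigr _ (fun j _ => wE j)) big_split /=.
rewrite -mulmx_sumr sumr_const card_ord scalerDr scalemxAr -scaler_nat scalerA.
by rewrite mulVf ?scale1r // pnatr_eq0 -lt0n.
Qed.

Lemma ens_cov_affine v w : (forall j, w j = P *m v j + b) ->
  ens_cov w = P *m ens_cov v *m P^T.
Proof.
move=> wE; rewrite /ens_cov (ens_mean_affine wE).
move: (ens_mean v) (J.-1%:R^-1) => m c; rewrite -scalemxAr -scalemxAl.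
congr (_ *: _); rewrite mulmx_sumr mulmx_suml; apply: eq_bigr => j _.
have -> : w j - (P *m m + b) = P *m (v j - m).
  by rewrite wE mulmxBr opprD addrACA subrr addr0.
by rewrite trmx_mul !mulmxA.
Qed.
End Ensemble.

Section EKI.
Variables (R : realType) (n d : nat) (H : 'M[R]_(n, d)) (S : 'M[R]_n).
Hypothesis sS : spd S.

Definition kalman_gain (G : 'M[R]_d) := G *m H^T *m invmx (H *m G *m H^T + S).

Lemma eki_stepE y J (v : 'I_J -> 'cV_d) j :
  eki_step H S y v j
  = (1%:M - kalman_gain (ens_cov v) *m H) *m v j + kalman_gain (ens_cov v) *m y.
Proof. by rewrite /eki_step mulmxBr mulmxBl mul1mx mulmxA addrA addrAC. Qed.

Lemma eki_Gamma_succ y J (v0 : 'I_J -> 'cV_d) i : (0 < J)%N ->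
  let G := eki_Gamma H S y v0 i in
  eki_Gamma H S y v0 i.+1
  = (1%:M - kalman_gain G *m H) *m G *m (1%:M - kalman_gain G *m H)^T.
Proof.
by move=> J0 G; rewrite /eki_Gamma /eki_iter iterS (ens_cov_affine J0 (eki_stepE _ _)).
Qed.

Lemma kalman_update_obs (G : 'M[R]_d) : G^T = G -> psd G ->
  let A := H *m G *m H^T in let C := A + S in
  H *m ((1%:M - kalman_gain G *m H) *m G *m (1%:M - kalman_gain G *m H)^T) *m H^T
  = S *m invmx C *m A *m invmx C *m S.
Proof.
move=> sG pG A C.
have Cu : C \in unitmx := psd_add_spd_unitmx sS (psd_mulmx_tr H pG).
have sC : C^T = C by rewrite linearD /= trmx_sym_form // (spd_sym sS).
have HKH : H *m (1%:M - kalman_gain G *m H) = S *m invmx C *m H.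
  rewrite mulmxBr mulmx1 /kalman_gain !mulmxA -/A -/C.
  have -> : A = C - S by rewrite addrK.
  by rewrite mulmxBl mulmxV // mulmxBl mul1mx opprB addrC subrK.
rewrite !mulmxA HKH -mulmxA -trmx_mul HKH.
by rewrite !trmx_mul trmx_inv sC (spd_sym sS) !mulmxA.
Qed.

Lemma gen_eigen_update (A : 'M[R]_n) (w : 'cV_n) (dl : R) :
  (A + S) \in unitmx -> 0 <= dl -> A *m w = dl *: (S *m w) ->
  S *m invmx (A + S) *m A *m invmx (A + S) *m S *m w = shrink dl *: (S *m w).
Proof.
move=> Cu dl0 hA; set C := A + S.
have d1 : 1 + dl != 0 by rewrite gt_eqF //; lra.
have hC : invmx C *m S *m w = (1 + dl)^-1 *: w.
  have : C *m w = (1 + dl) *: (S *m w) by rewrite mulmxDl hA scalerDl scale1r addrC.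
  move/(congr1 (mulmx (invmx C))); rewrite mulKmx // -scalemxAr => hw.
  by rewrite [in RHS]hw scalerA mulVf // scale1r mulmxA.
rewrite -!mulmxA [invmx C *m (S *m w)]mulmxA hC -!scalemxAr hA -!scalemxAr.
rewrite [invmx C *m (S *m w)]mulmxA hC -!scalemxAr !scalerA; congr (_ *: _).
by rewrite /shrink; field.
Qed.

Lemma eki_gen_eigenvector y J (v0 : 'I_J -> 'cV_d) (w : 'cV_n) (dl : R) :
  (0 < J)%N -> 0 <= dl ->
  H *m eki_Gamma H S y v0 0 *m H^T *m w = dl *: (S *m w) ->
  forall i, H *m eki_Gamma H S y v0 i *m H^T *m w = iter i shrink dl *: (S *m w).
Proof.
move=> J0 dl0 h0; elim=> // i IH.
have [sG pG] := (ens_cov_sym (eki_iter H S y v0 i), ens_cov_psd (eki_iter H S y v0 i)).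
rewrite eki_Gamma_succ // kalman_update_obs // iterS.
apply: gen_eigen_update IH; last exact: iter_shrink_ge0.
exact/psd_add_spd_unitmx/psd_mulmx_tr.
Qed.
End EKI.

Theorem proposition3p2 (R : realType) (n d h J : nat)
  (H : 'M[R]_(n, d)) (Sigma : 'M[R]_n) (y : 'cV[R]_n)
  (v0 : 'I_J -> 'cV[R]_d) :
  \rank H = h -> spd Sigma -> (2 <= J)%N ->
  exists (w : 'I_n -> 'cV[R]_n) (delta : 'I_n -> nat -> R),
    let r := #|[pred l : 'I_n | 0 < delta l 0%N]| in
    let W := \matrix_(l < n, k < n) w l k ord0 in
      (* {w_l} is a basis of R^n *)
      row_free W /\
      (* Sigma-orthogonality *)
      (forall l k : 'I_n, l != k -> (w l)^T *m Sigma *m w k = 0) /\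
      (* w_l is a generalized eigenvector of (H Gamma_i H^T, Sigma) for every i,
         with eigenvalue delta l i *)
      (forall (l : 'I_n) (i : nat),
          H *m eki_Gamma H Sigma y v0 i *m H^T *m w l = delta l i *: (Sigma *m w l)) /\
      (* zero stays zero, positive stays positive *)
      (forall l : 'I_n, delta l 0%N = 0 -> forall i, delta l i = 0) /\
      (forall l : 'I_n, 0 < delta l 0%N -> forall i, 0 < delta l i) /\
      (* (1) first r vectors: positive eigenvalues, ordered for all i >= 1 *)
      (forall l : 'I_n, (l < r)%N -> forall i, 0 < delta l i) /\
      (forall (i : nat) (l1 l2 : 'I_n), (1 <= i)%N -> (l1 <= l2)%N -> (l2 < r)%N ->
          delta l2 i <= delta l1 i) /\
      (* (1),(2): r <= h, w_1..w_h in Ran(Sigma^-1 H); eigenvalue zero from r on *)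
      [/\ (r <= h)%N,
          (forall l : 'I_n, (l < h)%N -> ((w l)^T <= (invmx Sigma *m H)^T)%MS),
          (forall l : 'I_n, (r <= l)%N -> forall i, delta l i = 0) &
          (* (3) w_{h+1}..w_n in Ker(H^T) *)
          (forall l : 'I_n, (h <= l)%N -> H^T *m w l = 0)] /\
      (* span(w_1..w_h) = Ran(Sigma^-1 H), span(w_{h+1}..w_n) = Ker(H^T) *)
      ((\sum_(l < n | (l < h)%N) <<(w l)^T>>)%MS == ((invmx Sigma *m H)^T)%MS)%MS /\
      ((\sum_(l < n | (h <= l)%N) <<(w l)^T>>)%MS == kermx H)%MS.
Proof.
move=> rH sS J2; have J0 : (0 < J)%N := ltnW J2.
have [k nE] : exists k, n = (h + k)%N.
  by exists (n - h)%N; rewrite subnKC // -rH rank_leq_row.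
subst n; set G := eki_Gamma H Sigma y v0 0.
have [sG pG] : G^T = G /\ psd G by split; [apply: ens_cov_sym | apply: ens_cov_psd].
(* The basis is sorted by the eigenvalues at i = 1, not at i = 0. *)
have [w [D [[wn0 ow hw D_ge0] [wU wK D_sorted]]]] :=
  adapted_gen_eigenbasis rH sG pG sS shrink.
have [rh r_pos r_zero r_order] :=
  iter_shrink_spectrum D_ge0 (fun l hl => (wK l hl).2) D_sorted.
exists (fun l => (w l)^T), (fun l i => iter i shrink (D l)) => r W.
have WE_free : row_free (\matrix_l w l) := sorth_row_free sS wn0 ow.
have W_free : row_free W.
  by have -> : W = \matrix_l w l by apply/matrixP => l m; rewrite !mxE.
split=> //; split=> [l l' /ow|]; first by rewrite trmxK.
split=> [l i|].
  apply: eki_gen_eigenvector => //.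
  by rewrite -/G -(trmx_sym_form _ _ sG) -trmx_mul hw linearZ /= trmx_mul (spd_sym sS).
split=> [l /= -> i|]; first exact: iter_shrink0.
split=> [l /= ? i|]; first exact: iter_shrink_gt0.
split; first exact: r_pos.
split; first exact: r_order.
split.
  split=> // [l /wU|l /wK [wH _]]; first by rewrite trmxK.
  by rewrite -trmx_mul wH trmx0.
have [spanU spanK] := adapted_basis_spans rH sS WE_free wU (fun l hl => (wK l hl).1).
by split; under eq_bigr do rewrite trmxK.
Qed.
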